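(* Let $N$ be an $n$-dimensional hypersurface isometrically immersed in Euclidean space $\mathbb R^{n+1}$. Then $N$ is $\Phi$-SSU with respect to this immersion if and only if at every point, for a suitable choice of unit normal, its principal curvatures satisfy $0<\lambda_1\le\lambda_2\le\cdots\le\lambda_n<\frac13(\lambda_1+\cdots+\lambda_{n-1})$.
   Context: For an isometric immersion of a Riemannian $n$-manifold $N$ into $\mathbb R^q$ with second fundamental form $\mathsf B$, $N$ is $\Phi$-SSU with respect to this immersion if for every $y\in N$ and every unit tangent vector $\mathsf x\in T_yN$, $\sum_{\beta=1}^n\big(4|\mathsf B(\mathsf x,\mathsf e_\beta)|^2-\langle \mathsf B(\mathsf x,\mathsf x),\mathsf B(\mathsf e_\beta,\mathsf e_\beta)\rangle\big)<0$, where $\{\mathsf e_\beta\}$ is an orthonormal basis of $T_yN$. *)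

From mathcomp Require Import all_boot all_order all_algebra.
From mathcomp Require Import reals.
Set Implicit Arguments. Unset Strict Implicit. Unset Printing Implicit Defensive.
Import Order.TTheory GRing.Theory Num.Theory.
Local Open Scope ring_scope.

Definition dotv (R : realType) (q : nat) (u v : 'rV[R]_q) : R := (u *m v^T) 0 0.

Definition ebasis (R : realType) (n : nat) (b : 'I_n) : 'rV[R]_n := delta_mx 0 b.

(* Phi-SSU condition at a point y, for the second fundamental form
   B : T_yN x T_yN -> R^q, with T_yN identified with R^n via an orthonormal
   frame (so the standard basis is an orthonormal basis of T_yN). *)
Definition PhiSSU_at (R : realType) (n q : nat)
  (B : 'rV[R]_n -> 'rV[R]_n -> 'rV[R]_q) : Prop :=
  forall x : 'rV[R]_n, dotv x x = 1 ->
    \sum_(b < n) (4 * dotv (B x (@ebasis R n b)) (B x (@ebasis R n b))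
                  - dotv (B x x) (B (@ebasis R n b) (@ebasis R n b))) < 0.

(* Second fundamental form of a hypersurface at a point: B(x,z) = h(x,z) nu,
   where h is the scalar second fundamental form (symmetric matrix in an
   orthonormal tangent frame) w.r.t. the unit normal nu in R^(n+1). *)
Definition hyp_sff (R : realType) (n : nat) (h : 'M[R]_n) (nu : 'rV[R]_n.+1)
  (x z : 'rV[R]_n) : 'rV[R]_n.+1 := (x *m h *m z^T) 0 0 *: nu.

(* The principal curvatures (eigenvalues of the shape operator h, with
   multiplicity, i.e. roots of its characteristic polynomial), listed in
   nondecreasing order lam_1 <= ... <= lam_m, satisfy
   0 < lam_1 and lam_m < (lam_1 + ... + lam_(m-1))/3. *)
Definition pc_condition (R : realType) (n : nat) (h : 'M[R]_n.+1) : Prop :=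
  exists lam : 'I_n.+1 -> R,
    char_poly h = \prod_(i < n.+1) ('X - (lam i)%:P) /\
    (forall i j : 'I_n.+1, (i <= j)%N -> lam i <= lam j) /\
    0 < lam ord0 /\
    lam ord_max < (\sum_(i < n.+1 | i != ord_max) lam i) / 3.

From mathcomp Require Import all_boot all_order all_algebra.
From mathcomp Require Import reals.
From mathcomp Require Import complex sesquilinear spectral ring lra.
Set Implicit Arguments. Unset Strict Implicit. Unset Printing Implicit Defensive.
Import Order.TTheory GRing.Theory Num.Theory.
Local Open Scope ring_scope.

(* Since B(x, z) = h(x, z) nu with |nu| = 1, the SSU sum at a unit vector x
   is Phi(x) = 4 |x h|^2 - h(x, x) tr h.  Diagonalising the symmetric h in an
   orthonormal eigenbasis with eigenvalues lam_i, and writing w_i >= 0 for the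
   squared coordinates of x (so sum_i w_i = 1), gives
   Phi(x) = sum_i w_i lam_i (4 lam_i - tr h).  Hence Phi < 0 on the unit sphere
   iff lam_i (4 lam_i - tr h) < 0 for every i (test on unit eigenvectors for
   the converse), i.e. iff every lam_i lies strictly between 0 and tr h / 4.
   This forces tr h <> 0; flipping the normal so that tr h > 0, it says
   exactly that all lam_i > 0 and 4 lam_max < lam_1 + ... + lam_n. *)

Lemma char_poly_conj (F : fieldType) m (Q P D : 'M[F]_m) :
  Q *m P = 1%:M -> char_poly (Q *m D *m P) = char_poly D.
Proof.
move=> QP; rewrite /char_poly /char_poly_mx.
have EX : ('X%:M : 'M[{poly F}]_m) = map_mx polyC Q *m 'X%:M *m map_mx polyC P.
  by rewrite -mulmxA -scalar_mxC mulmxA -map_mxM QP map_mx1 mul1mx.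
rewrite {1}EX !map_mxM -mulmxBl -mulmxBr !det_mulmx mulrAC -det_mulmx -map_mxM QP.
by rewrite map_mx1 det1 mul1r.
Qed.

Lemma big_codom (T U : Type) (idx : T) (op : Monoid.com_law idx) (I : finType)
    (F : U -> T) (a : I -> U) :
  \big[op/idx]_(x <- codom a) F x = \big[op/idx]_i F (a i).
Proof. by rewrite big_image. Qed.

Lemma codom_nth (T : Type) (x0 : T) m (s : seq T) :
  size s = m -> codom (fun i : 'I_m => nth x0 s i) = s.
Proof.
by move=> <-; rewrite codomE -[RHS](mkseq_nth x0) /mkseq -val_enum_ord -map_comp.
Qed.

Lemma perm_codom_prod_XsubC (F : fieldType) (I : finType) (a b : I -> F) :
  \prod_i ('X - (a i)%:P) = \prod_i ('X - (b i)%:P) -> perm_eq (codom a) (codom b).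
Proof. by move=> ab; apply: prod_XsubC_eq; rewrite !big_image. Qed.

Lemma weighted_sum_lt0 (F : realDomainType) (I : finType) (w c : I -> F) :
  (forall i, 0 <= w i) -> (forall i, c i < 0) -> \sum_i w i = 1 ->
  \sum_i w i * c i < 0.
Proof.
move=> w_ge0 c_lt0 w1.
have [k /andP[_ wk_gt0]] : exists k, true && (0 < w k).
  apply: psumr_neq0P => [i _|]; first exact: w_ge0.
  by rewrite w1; apply/eqP/oner_neq0.
have rest_le0 : \sum_(i | i != k) w i * c i <= 0.
  by apply: sumr_le0 => i _; exact: mulr_ge0_le0 (w_ge0 i) (ltW (c_lt0 i)).
have := c_lt0 k; rewrite (bigD1 k) //=; nra.
Qed.

Lemma mulmx_trmx_gt0 (F : realDomainType) m (v : 'rV[F]_m) :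
  v != 0 -> 0 < (v *m v^T) 0 0.
Proof.
move=> v0; have -> : (v *m v^T) 0 0 = \sum_j v 0 j ^+ 2.
  by rewrite mxE; apply: eq_bigr => j _; rewrite !mxE expr2.
rewrite lt_def sumr_ge0 ?andbT => [|j _]; last exact: sqr_ge0.
apply: contra v0 => /eqP /(psumr_eq0P (fun j _ => sqr_ge0 (v 0 j))) v2_0.
by apply/eqP/rowP => j; apply/eqP; rewrite mxE -sqrf_eq0 v2_0.
Qed.

Lemma unit_eigenvector (F : rcfType) m (A : 'M[F]_m) a :
  eigenvalue A a -> exists x : 'rV_m, (x *m x^T) 0 0 = 1 /\ x *m A = a *: x.
Proof.
case/eigenvalueP => v vA /mulmx_trmx_gt0 v_gt0.
exists ((Num.sqrt ((v *m v^T) 0 0))^-1 *: v); split.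
  rewrite -scalemxAl linearZ /= -scalemxAr scalerA -expr2 exprVn sqr_sqrtr ?ltW //.
  by rewrite [LHS]mxE mulVf ?gt_eqF.
by rewrite -scalemxAl vA scalerA mulrC -scalerA.
Qed.

Definition phi_form (F : comNzRingType) m (A : 'M[F]_m) (x : 'rV[F]_m) : F :=
  4 * (x *m (A *m A) *m x^T) 0 0 - (x *m A *m x^T) 0 0 * \tr A.

Lemma phi_form_eigenvector (F : comNzRingType) m (A : 'M[F]_m) x a :
  x *m A = a *: x -> phi_form A x = (x *m x^T) 0 0 * (a * (4 * a - \tr A)).
Proof.
move=> xA; rewrite /phi_form mulmxA xA -scalemxAl xA scalerA -!scalemxAl.
by rewrite ![((_ *: _ : 'M[F]_1) 0 0)]mxE; ring.
Qed.

Section RealSpectral.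
Variable R : rcfType.
Local Notation C := R[i].
Local Notation toC := (real_complex R).
Local Open Scope sesquilinear_scope.

(* The spectral theorem of [spectral] is stated over a numClosedFieldType, so
   a real symmetric matrix is diagonalised over R[i]: the rows of the unitary
   P form an orthonormal eigenbasis and d lists the (real) eigenvalues. *)
Definition is_spectral_decomp m (A : 'M[R]_m) (P : 'M[C]_m) (d : 'I_m -> R) :=
  P \is unitarymx /\ map_mx toC A = P^t* *m diag_mx (\row_i (d i)%:C%C) *m P.

Lemma sym_spectral_decomp m (A : 'M[R]_m) :
  A^T = A -> exists P d, is_spectral_decomp A P d.
Proof.
move=> sA; set AC := map_mx toC A.
have AC_herm : AC \is hermsymmx.
  apply: realsym_hermsym.
    by apply/is_hermitianmxP; rewrite expr0 scale1r map_mx_id // /AC map_trmx sA.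
  by apply/mxOverP => i j; rewrite mxE; apply/complex_realP; exists (A i j).
have PU := spectral_unitarymx AC.
exists (spectralmx AC), (fun i => complex.Re (spectral_diag AC 0 i)); split => //.
have /orthomx_spectralP E := hermitian_normalmx AC_herm.
rewrite -invmx_unitary // [LHS]E; congr (_ *m diag_mx _ *m _).
apply/rowP => i; rewrite mxE RRe_real //.
exact: (mxOverP (hermitian_spectral_diag_real AC_herm)).
Qed.

Definition spectral_weight m (P : 'M[C]_m) (x : 'rV[R]_m) (i : 'I_m) : R :=
  let z := (map_mx toC x *m P^t*) 0 i in complex.Re z ^+ 2 + complex.Im z ^+ 2.

Lemma spectral_weight_ge0 m P x i : 0 <= @spectral_weight m P x i.
Proof. by rewrite addr_ge0 ?sqr_ge0. Qed.

Section Decomp.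
Variables (m : nat) (A : 'M[R]_m) (P : 'M[C]_m) (d : 'I_m -> R).
Hypothesis hPd : is_spectral_decomp A P d.

Lemma spectral_decompZ (s : R) :
  is_spectral_decomp (s *: A) P (fun i => s * d i).
Proof.
case: hPd => PU E; split => //.
rewrite map_mxZ E scalemxAl scalemxAr; congr (_ *m _ *m _).
by apply/matrixP => i j; rewrite !mxE rmorphM mulrnAr.
Qed.

Lemma spectral_decomp_sqr :
  is_spectral_decomp (A *m A) P (fun i => d i * d i).
Proof.
case: hPd => PU E; split => //.
rewrite map_mxM E -!mulmxA; congr (_ *m _).
rewrite !mulmxA mulmxtVK // mulmx_diag; congr (diag_mx _ *m _).
by apply/rowP => i; rewrite !mxE rmorphM.
Qed.

Lemma spectral_decomp1 : is_spectral_decomp 1%:M P (fun=> 1).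
Proof.
case: hPd => PU _; split => //.
rewrite map_mx1 (_ : \row_i _ = const_mx 1); last by apply/rowP => i; rewrite !mxE.
by rewrite diag_const_mx mulmx1 -[P^t*]mul1mx mulmxKtV.
Qed.

Lemma char_poly_spectral : char_poly A = \prod_i ('X - (d i)%:P).
Proof.
case: hPd => PU E; apply: (@map_poly_inj _ _ toC).
rewrite map_char_poly E char_poly_conj; last by rewrite -[P^t*]mul1mx mulmxKtV.
rewrite char_poly_trig ?diag_mx_is_trig // rmorph_prod; apply: eq_bigr => i _.
by rewrite rmorphB /= map_polyX map_polyC /= !mxE eqxx mulr1n.
Qed.

Lemma mxtrace_spectral : \tr A = \sum_i d i.
Proof.
case: hPd => PU E; apply: (@complexI R).
rewrite -trace_map_mx E mxtrace_mulC mulmxA (unitarymxP PU) mul1mx.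
rewrite mxtrace_diag rmorph_sum.
by apply: eq_bigr => i _; rewrite mxE.
Qed.

Lemma eigenvalue_spectral i : eigenvalue A (d i).
Proof.
rewrite eigenvalue_root_char char_poly_spectral.
by rewrite -(big_codom _ (fun x => 'X - x%:P)) root_prod_XsubC codom_f.
Qed.

Lemma quad_form_spectral (x : 'rV[R]_m) :
  (x *m A *m x^T) 0 0 = \sum_i d i * spectral_weight P x i.
Proof.
case: hPd => PU E; apply: (@complexI R).
have xT_conj : (map_mx toC x)^T = (map_mx toC x)^t*.
  by apply/matrixP => i j; rewrite !mxE; exact/esym/conjc_real.
have -> : toC ((x *m A *m x^T) 0 0) =
    (map_mx toC x *m map_mx toC A *m (map_mx toC x)^T) 0 0.
  by rewrite map_trmx -!map_mxM [RHS]mxE.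
rewrite E xT_conj !mulmxA -[_ *m P *m _]mulmxA.
rewrite -[P *m _]trmxCK trmx_mul map_mxM trmxCK /spectral_weight.
set y := map_mx toC x *m P^t*; clearbody y.
rewrite mul_mx_diag mxE rmorph_sum; apply: eq_bigr => i _.
by rewrite !mxE mulrAC -sqr_normc -add_Re2_Im2 mulrC -rmorphM.
Qed.

End Decomp.

Lemma phi_form_spectral m (A : 'M[R]_m) P d x : is_spectral_decomp A P d ->
  phi_form A x = \sum_i spectral_weight P x i * (d i * (4 * d i - \tr A)).
Proof.
move=> hPd; rewrite /phi_form (quad_form_spectral (spectral_decomp_sqr hPd)).
rewrite (quad_form_spectral hPd) mulr_sumr mulr_suml -sumrB.
by apply: eq_bigr => i _; ring.
Qed.

Lemma phi_form_lt0_spectral m (A : 'M[R]_m) P d : is_spectral_decomp A P d ->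
  (forall x, (x *m x^T) 0 0 = 1 -> phi_form A x < 0) <->
  (forall i, d i * (4 * d i - \tr A) < 0).
Proof.
move=> hPd; split => [neg i | neg x x1].
  have [x [x1 xA]] := unit_eigenvector (eigenvalue_spectral hPd i).
  by have := neg x x1; rewrite (phi_form_eigenvector xA) x1 mul1r.
rewrite (phi_form_spectral _ hPd); apply: weighted_sum_lt0 => //.
  exact: spectral_weight_ge0.
rewrite -x1 -[x in x *m _^T]mulmx1 (quad_form_spectral (spectral_decomp1 hPd)).
by apply: eq_bigr => i _; rewrite mul1r.
Qed.

End RealSpectral.

Lemma sign_flip_between (F : realFieldType) m (d : 'I_m.+1 -> F) t :
  (forall i, d i * (4 * d i - t) < 0) <->
  exists s, (s = 1 \/ s = -1) /\ forall i, 0 < s * d i /\ 4 * (s * d i) < s * t.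
Proof.
split => [neg | [s [s_sign pos]] i]; last first.
  by have [sd_gt0 sd_lt] := pos i; case: s_sign => s1; subst s; nra.
have := neg ord0; have [t_lt0|t_gt0|->] := ltgtP t 0 => [_||]; last by nra.
  by exists (-1); split => [|i]; [right | have := neg i; split; nra].
by exists 1; split => [|i]; [left | have := neg i; split; nra].
Qed.

Lemma pc_conditionP (R : realType) n (A : 'M[R]_n.+1) (d : 'I_n.+1 -> R) :
  char_poly A = \prod_i ('X - (d i)%:P) ->
  pc_condition A <-> forall i, 0 < d i /\ 4 * d i < \sum_j d j.
Proof.
move=> cpA; split.
  case=> lam [cpl [mono [lam0_gt0 lam_max_lt]]] i.
  have pe : perm_eq (codom d) (codom lam).
    by apply: perm_codom_prod_XsubC; rewrite -cpA.
  have -> : \sum_j d j = \sum_j lam j by rewrite -!(big_codom _ id); exact: perm_big.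
  have /codomP [j ->] : d i \in codom lam by rewrite -(perm_mem pe) codom_f.
  have := mono ord0 j isT; have := mono j ord_max (leq_ord j).
  by rewrite [\sum_j lam j](bigD1 ord_max) //=; split; lra.
move=> pos; set s := sort <=%R (codom d).
have ps : perm_eq s (codom d) by rewrite perm_sort.
have ss : size s = n.+1 by rewrite (perm_size ps) size_codom card_ord.
have s_d (i : 'I_n.+1) : exists j, nth 0 s i = d j.
  by apply/codomP; rewrite -(perm_mem ps) mem_nth ?ss.
have sum_s : \sum_j d j = \sum_(i < n.+1) nth 0 s i.
  rewrite -(big_codom _ id d) -(big_codom _ id) codom_nth //.
  by apply/perm_big; rewrite perm_sym.
exists (fun i => nth 0 s i); split; [|split; [|split]].
- rewrite cpA -!(big_codom _ (fun x => 'X - x%:P)) codom_nth //.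
  by apply/perm_big; rewrite perm_sym.
- move=> i j ij; apply: le_sorted_leq_nth; rewrite ?inE ?ss //.
  exact: sort_sorted le_total _.
- by have [j ->] := s_d ord0; case: (pos j).
- have [j dj] := s_d ord_max; have := (pos j).2.
  by rewrite sum_s (bigD1 ord_max) //= dj; lra.
Qed.

Section PhiSSU.
Variable R : realType.

Lemma dotvZ q (a b : R) (u v : 'rV[R]_q) :
  dotv (a *: u) (b *: v) = a * b * dotv u v.
Proof. by rewrite /dotv linearZ /= -scalemxAl -scalemxAr !mxE mulrA. Qed.

Lemma mulmx_ebasis_tr m p (M : 'M[R]_(p, m)) i b :
  (M *m (ebasis R b)^T) i 0 = M i b.
Proof. by rewrite /ebasis trmx_delta -colE mxE. Qed.

Lemma ebasis_quad m (h : 'M[R]_m) b :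
  (ebasis R b *m h *m (ebasis R b)^T) 0 0 = h b b.
Proof. by rewrite mulmx_ebasis_tr /ebasis -rowE mxE. Qed.

Lemma PhiSSU_sum_hyp_sff m (h : 'M[R]_m) (nu : 'rV[R]_m.+1) (x : 'rV[R]_m) :
  h^T = h -> dotv nu nu = 1 ->
  \sum_(b < m) (4 * dotv (hyp_sff h nu x (ebasis R b)) (hyp_sff h nu x (ebasis R b))
                - dotv (hyp_sff h nu x x) (hyp_sff h nu (ebasis R b) (ebasis R b)))
  = phi_form h x.
Proof.
move=> sh nu1; rewrite /hyp_sff /phi_form.
under eq_bigr do rewrite !dotvZ nu1 !mulr1 ebasis_quad !mulmx_ebasis_tr.
rewrite sumrB -!mulr_sumr.
suff -> : (x *m (h *m h) *m x^T) 0 0 = \sum_i (x *m h) 0 i * (x *m h) 0 i by [].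
rewrite mulmxA -[x *m h *m h *m x^T]mulmxA -[h *m x^T]trmxK trmx_mul trmxK sh.
rewrite mxE.
by apply: eq_bigr => b _; rewrite [(x *m h)^T _ _]mxE.
Qed.

Lemma PhiSSU_hyp_sffE m (h : 'M[R]_m) (nu : 'rV[R]_m.+1) :
  h^T = h -> dotv nu nu = 1 ->
  PhiSSU_at (hyp_sff h nu) <-> forall x, dotv x x = 1 -> phi_form h x < 0.
Proof. by move=> sh nu1; split => neg x /neg; rewrite PhiSSU_sum_hyp_sff. Qed.

Lemma PhiSSU_hyp_sff_pc n (h : 'M[R]_n.+1) (nu : 'rV[R]_n.+2) :
  h^T = h -> dotv nu nu = 1 ->
  PhiSSU_at (hyp_sff h nu) <->
  exists s : R, (s = 1 \/ s = -1) /\ pc_condition (s *: h).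
Proof.
move=> sh nu1; have [P [d hPd]] := sym_spectral_decomp sh.
have pcZ s : pc_condition (s *: h) <->
    forall i, 0 < s * d i /\ 4 * (s * d i) < s * \tr h.
  rewrite (mxtrace_spectral hPd) mulr_sumr.
  exact: pc_conditionP (char_poly_spectral (spectral_decompZ hPd s)).
apply: (iff_trans (PhiSSU_hyp_sffE sh nu1)).
apply: (iff_trans (phi_form_lt0_spectral hPd)).
apply: (iff_trans (sign_flip_between d _)).
by split => -[s [s_sign spec]]; exists s; split => //; apply/pcZ.
Qed.

End PhiSSU.

Theorem theorem5p1 (R : realType) (n : nat) (N : Type)
  (h : N -> 'M[R]_n.+1) (nu : N -> 'rV[R]_n.+2) :
  (forall y, (h y)^T = h y) ->
  (forall y, dotv (nu y) (nu y) = 1) ->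
  ((forall y, PhiSSU_at (hyp_sff (h y) (nu y))) <->
   (forall y, exists s : R, (s = 1 \/ s = -1) /\ pc_condition (s *: h y))).
Proof.
move=> sh nu1.
by split => ssu y; apply/(PhiSSU_hyp_sff_pc (sh y) (nu1 y)); apply: ssu.
Qed.
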